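(* Let $X\subset\mathbb{Z}^2$ be a simple closed $4$-curve with $4$ elements ($SC_4^{2,4}$, with the $4$-adjacency) and $Y\subset\mathbb{Z}^2$ a simple closed $8$-curve with $6$ elements ($SC_8^{2,6}$, with the $8$-adjacency). Then for no $k\in\{8,32,64,80\}$ (i.e. $k=k(t,4)$, $t\in\{1,2,3,4\}$) is the $k$-adjacency of $\mathbb{Z}^4$ on $X\times Y$ normal with respect to the given adjacencies of $X$ and $Y$.
   Context: For $t\in[1,n]$, distinct $p,q\in\mathbb{Z}^n$ are $k(t,n)$-adjacent if $|p_i-q_i|\le1$ for all $i$ and $p_i\ne q_i$ for at most $t$ indices; $k(t,n)=\sum_{i=1}^t 2^i\binom{n}{i}$ (so $4=k(1,2)$, $8=k(2,2)$; $k(1,4)=8,k(2,4)=32,k(3,4)=64,k(4,4)=80$). A simple closed $k$-curve with $l\ge4$ elements in $\mathbb{Z}^n$, denoted $SC_k^{n,l}$, is a set $\{y_0,\dots,y_{l-1}\}$ of $l$ distinct points such that $y_i,y_j$ are $k$-adjacent iff $i-j\equiv\pm1\pmod l$. For $X\subset\mathbb{Z}^{n_1}$ with $k_1$-adjacency and $Y\subset\mathbb{Z}^{n_2}$ with $k_2$-adjacency, a $k$-adjacency of $\mathbb{Z}^{n_1+n_2}$ is normal on $X\times Y$ if for all distinct $(x,y),(x',y')\in X\times Y$: they are $k$-adjacent iff ($x=x'$ and $y,y'$ $k_2$-adjacent) or ($y=y'$ and $x,x'$ $k_1$-adjacent) or ($x,x'$ $k_1$-adjacent and $y,y'$ $k_2$-adjacent).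 *)

From mathcomp Require Import all_boot all_order all_algebra.
Unset Printing Implicit Defensive.
Import Order.TTheory GRing.Theory Num.Theory.
Local Open Scope ring_scope.

Definition pt (n : nat) := 'I_n -> int.

Definition kadj (t n : nat) (p q : pt n) : Prop :=
  p <> q /\ (forall i, `|p i - q i| <= 1) /\
  (#|[set i : 'I_n | p i != q i]| <= t)%N.

Definition is_SC (t n l : nat) (X : pt n -> Prop) : Prop :=
  (4 <= l)%N /\
  exists y : 'I_l -> pt n,
    injective y /\ (forall p, X p <-> exists i, y i = p) /\
    forall i j : 'I_l,
      kadj t n (y i) (y j) <->
      ((i : nat) = (j.+1 %% l)%N \/ (j : nat) = (i.+1 %% l)%N).

Definition cat_pt (n1 n2 : nat) (x : pt n1) (y : pt n2) : pt (n1 + n2) :=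
  fun i => match split i with inl j => x j | inr j => y j end.

Definition normal_adj (t n1 n2 t1 t2 : nat) (X : pt n1 -> Prop) (Y : pt n2 -> Prop)
  : Prop :=
  forall x y x' y', X x -> Y y -> X x' -> Y y' -> (x, y) <> (x', y') ->
    (kadj t (n1 + n2) (cat_pt n1 n2 x y) (cat_pt n1 n2 x' y') <->
     ((x = x' /\ kadj t2 n2 y y') \/ (y = y' /\ kadj t1 n1 x x') \/
      (kadj t1 n1 x x' /\ kadj t2 n2 y y'))).

From mathcomp Require Import all_boot all_order all_algebra zify.
From Stdlib Require Import FunctionalExtensionality.
Import Order.TTheory GRing.Theory Num.Theory.
Local Open Scope ring_scope.

(* Two obstructions to normality of a k(t,4)-adjacency on X x Y.
   - t = 1: for consecutive points x, x' of X and y, y' of Y the points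
     (x,y), (x',y') of Z^4 differ in at least two coordinates, so they are not
     k(1,4)-adjacent, although normality demands it.
   - t >= 2: a simple closed 4-curve with 4 elements is a unit square, so its
     opposite points x0, x2 lie at Chebyshev distance 1 while not being
     4-adjacent.  Then (x0,y) and (x2,y) are k(t,4)-adjacent (they differ in at
     most 2 <= t coordinates), although normality forbids it. *)

Definition diff_set {n : nat} (p q : pt n) : {set 'I_n} := [set i | p i != q i].

Lemma diff_set_eq0 (n : nat) (p q : pt n) : #|diff_set p q| = 0%N <-> p = q.
Proof.
split=> [/eqP | ->]; last first.
  by apply/eqP; rewrite cards_eq0; apply/eqP/setP => i; rewrite !inE eqxx.
rewrite cards_eq0 => /eqP diff0; apply: (@functional_extensionality 'I_n int) => i.
apply/eqP/negbNE/negP => neq.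
have : i \in diff_set p q by rewrite inE.
by rewrite diff0 inE.
Qed.

Lemma kadjE (t n : nat) (p q : pt n) :
  kadj t n p q <->
  [/\ (0 < #|diff_set p q|)%N, forall i, `|p i - q i| <= 1
    & (#|diff_set p q| <= t)%N].
Proof.
rewrite /kadj -/(diff_set p q) lt0n; split.
  by case=> neq [near le_t]; split=> //; apply/eqP => /diff_set_eq0.
by case=> /eqP neq near le_t; split=> //; move/diff_set_eq0.
Qed.

Section Concatenation.
Local Set Implicit Arguments.
Local Unset Strict Implicit.
Variables n1 n2 : nat.
Implicit Types (x : pt n1) (y : pt n2).

Lemma cat_pt_lshift x y (j : 'I_n1) : cat_pt n1 n2 x y (lshift n2 j) = x j.
Proof. by rewrite /cat_pt (unsplitK (inl j)). Qed.

Lemma cat_pt_rshift x y (j : 'I_n2) : cat_pt n1 n2 x y (rshift n1 j) = y j.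
Proof. by rewrite /cat_pt (unsplitK (inr j)). Qed.

Lemma card_diff_set_cat x y x' y' :
  #|diff_set (cat_pt n1 n2 x y) (cat_pt n1 n2 x' y')| =
  (#|diff_set x x'| + #|diff_set y y'|)%N.
Proof.
rewrite -!sum1dep_card big_split_ord /=.
by congr (_ + _)%N; apply: eq_bigl => j; rewrite ?cat_pt_lshift ?cat_pt_rshift.
Qed.

Lemma cat_pt_near x y x' y' :
  (forall j, `|x j - x' j| <= 1) -> (forall j, `|y j - y' j| <= 1) ->
  forall i, `|cat_pt n1 n2 x y i - cat_pt n1 n2 x' y' i| <= 1.
Proof. by move=> near_x near_y i; rewrite /cat_pt; case: (split i). Qed.

Lemma cat_pt_not_kadj1 x y x' y' :
  x <> x' -> y <> y' -> ~ kadj 1 (n1 + n2) (cat_pt n1 n2 x y) (cat_pt n1 n2 x' y').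
Proof.
move=> /diff_set_eq0/eqP; rewrite -lt0n => dx /diff_set_eq0/eqP; rewrite -lt0n => dy.
case/kadjE => _ _; rewrite card_diff_set_cat; lia.
Qed.

Lemma cat_pt_kadj_left (t : nat) x x' y :
  x <> x' -> (forall j, `|x j - x' j| <= 1) -> (#|diff_set x x'| <= t)%N ->
  kadj t (n1 + n2) (cat_pt n1 n2 x y) (cat_pt n1 n2 x' y).
Proof.
move=> /diff_set_eq0/eqP; rewrite -lt0n => dx near_x le_t.
have dy : #|diff_set y y| = 0%N by apply/diff_set_eq0.
apply/kadjE; rewrite card_diff_set_cat dy addn0; split=> //.
by apply: cat_pt_near => // j; rewrite subrr normr0.
Qed.

End Concatenation.

Section Obstructions.
Local Set Implicit Arguments.
Local Unset Strict Implicit.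
Variables (n1 n2 t1 t2 : nat) (X : pt n1 -> Prop) (Y : pt n2 -> Prop).

(* If X and Y both contain an adjacent pair, the k(1, n1+n2)-adjacency is not
   normal on X x Y: normality would make the two "diagonal" points adjacent. *)
Lemma not_normal_adj1 x x' y y' :
  X x -> X x' -> kadj t1 n1 x x' -> Y y -> Y y' -> kadj t2 n2 y y' ->
  ~ normal_adj 1 n1 n2 t1 t2 X Y.
Proof.
move=> Xx Xx' adj_x Yy Yy' adj_y normal.
have [neq_x _] := adj_x; have [neq_y _] := adj_y.
have neq : (x, y) <> (x', y') by case.
apply: (cat_pt_not_kadj1 neq_x neq_y).
by apply/(normal x y x' y') => //; right; right.
Qed.

(* If X contains two distinct non-adjacent points at Chebyshev distance 1
   differing in at most t coordinates, the k(t, n1+n2)-adjacency is not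
   normal on X x Y (for nonempty Y): it makes (x,y) and (x',y) adjacent. *)
Lemma not_normal_adj_near (t : nat) x x' y :
  X x -> X x' -> x <> x' -> ~ kadj t1 n1 x x' ->
  (forall j, `|x j - x' j| <= 1) -> (#|diff_set x x'| <= t)%N -> Y y ->
  ~ normal_adj t n1 n2 t1 t2 X Y.
Proof.
move=> Xx Xx' neq_x nadj_x near_x le_t Yy normal.
have neq : (x, y) <> (x', y) by case.
case: ((normal x y x' y Xx Yy Xx' Yy neq).1 (cat_pt_kadj_left y neq_x near_x le_t))
  => [[eq_x _] | [[_ adj_x] | [adj_x _]]]; by [apply: neq_x | apply: nadj_x].
Qed.

End Obstructions.

Lemma kadj1_other_fixed {n : nat} {p q : pt n} {j : 'I_n} :
  kadj 1 n p q -> p j != q j -> forall k, k != j -> p k = q k.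
Proof.
case/kadjE => _ _ /card_le1_eqP single dj k; apply: contra_neq_eq => dk.
by apply: single; rewrite inE.
Qed.

(* Four unit steps closing up around y0, y1, y2, y3 with y1 <> y3 bound a unit
   square: opposite corners y0, y2 are at Chebyshev distance at most 1.  If
   coordinate j moved by 2 between y0 and y2, then the steps y1-y2 and y2-y3
   both change coordinate j only, and in opposite directions, forcing
   y1 = y3. *)
Lemma square_diagonal (n : nat) (y0 y1 y2 y3 : pt n) :
  kadj 1 n y0 y1 -> kadj 1 n y1 y2 -> kadj 1 n y2 y3 -> kadj 1 n y3 y0 ->
  y1 <> y3 -> forall j, `|y0 j - y2 j| <= 1.
Proof.
move=> a01 a12 a23 a30 neq13 j; rewrite leNgt; apply/negP => far.
have near (p q : pt n) : kadj 1 n p q -> `|p j - q j| <= 1 by case/kadjE.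
have := near _ _ a01; have := near _ _ a12; have := near _ _ a23.
have := near _ _ a30 => n30 n23 n12 n01.
have d12 : y1 j != y2 j by apply/eqP; lia.
have d23 : y2 j != y3 j by apply/eqP; lia.
apply: neq13; apply: (@functional_extensionality 'I_n int) => k.
have [-> | nkj] := eqVneq k j; first by lia.
by rewrite (kadj1_other_fixed a12 d12 k nkj) (kadj1_other_fixed a23 d23 k nkj).
Qed.

Lemma SC_adjacent_pair {t n l : nat} {X : pt n -> Prop} :
  is_SC t n l X -> exists x x', [/\ X x, X x' & kadj t n x x'].
Proof.
case=> l_ge4 [y [_ [memX adj]]].
have l_gt1 : (1 < l)%N by lia.
exists (y (Ordinal (ltnW l_gt1))), (y (Ordinal l_gt1)).
split; try by apply/memX; eexists.
by apply/adj; right; rewrite /= modn_small.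
Qed.

Lemma SC4_diagonal {X : pt 2 -> Prop} :
  is_SC 1 2 4 X -> exists x x',
  [/\ X x, X x', x <> x', ~ kadj 1 2 x x' & forall j, `|x j - x' j| <= 1].
Proof.
case=> _ [y [inj_y [memX adj]]].
pose i0 : 'I_4 := @Ordinal 4 0 isT. pose i1 : 'I_4 := @Ordinal 4 1 isT.
pose i2 : 'I_4 := @Ordinal 4 2 isT. pose i3 : 'I_4 := @Ordinal 4 3 isT.
have step (i j : 'I_4) : (j : nat) = (i.+1 %% 4)%N -> kadj 1 2 (y i) (y j).
  by move=> ji; apply/adj; right.
exists (y i0), (y i2); split; try by apply/memX; eexists.
- by move/inj_y.
- by case/adj.
- apply: (@square_diagonal _ _ (y i1) _ (y i3)); try exact: step.
  by move/inj_y.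
Qed.

Theorem mainTheorem7 (X Y : pt 2 -> Prop) :
  is_SC 1 2 4 X -> is_SC 2 2 6 Y ->
  forall t : nat, (1 <= t <= 4)%N -> ~ normal_adj t 2 2 1 2 X Y.
Proof.
move=> SC_X SC_Y t /andP[t_ge1 _].
have [y [y' [Yy Yy' adj_y]]] := SC_adjacent_pair SC_Y.
have [t_le1 | t_ge2] := leqP t 1.
- have -> : t = 1%N by lia.
  have [x [x' [Xx Xx' adj_x]]] := SC_adjacent_pair SC_X.
  exact: (not_normal_adj1 Xx Xx' adj_x Yy Yy' adj_y).
- have [x [x' [Xx Xx' neq_x nadj_x near_x]]] := SC4_diagonal SC_X.
  have diff_le_t : (#|diff_set x x'| <= t)%N.
    by apply: leq_trans (max_card _) _; rewrite card_ord.
  exact: (not_normal_adj_near Xx Xx' neq_x nadj_x near_x diff_le_t Yy).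
Qed.
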